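(* Let $(p,q)$ be a piecewise elementary pair of partial isomorphisms of $\mathbb{Q}$ and suppose the triple $(p',q',w)$ liberates $p$ in $(p,q)$. Let $u$ be a reduced word that is either empty or of the form $u=t^nv$ ($n\neq0$, product reduced) such that $uw$ is reduced (no cancellation). Then there are partial isomorphisms $p''\supseteq p'$ and $q''\supseteq q'$ such that $(p'',q'',uw)$ liberates $p$ in $(p,q)$. The same holds with $p$ and $q$ interchanged: if $(p',q',w)$ liberates $q$ in $(p,q)$ and $u$ is empty or $u=s^mv$ ($m\ne0$) with $uw$ reduced, then there are $p''\supseteq p'$, $q''\supseteq q'$ with $(p'',q'',uw)$ liberating $q$ in $(p,q)$.
   Context: A partial isomorphism of $\mathbb{Q}$ is an order-preserving bijection $p$ between finite subsets $\mathrm{dom}(p),\mathrm{ran}(p)$ of $\mathbb{Q}$; $p'\supseteq p$ means $p'$ extends $p$; $p|_I$ is the restriction of $p$ to $I\cap\mathrm{dom}(p)$; $\mathrm{Fix}(p)=\{c\in\mathrm{dom}(p):p(c)=c\}$. An open interval $(a,b)$ is $p$-increasing if $a,b\in\mathrm{dom}(p)$, $p(a)=a$, $p(b)=b$ and $p(c)>c$ for all $c\in\mathrm{dom}(p)\cap(a,b)$; $p$-decreasing likewise with $p(c)<c$; $p$-monotone means either. Writing $\mathrm{dom}(p)=\{a_0<\dots<a_n\}$, $p$ is informative if $p(a_0)=a_0$, $p(a_n)=a_n$ and there are indices $0=i_0<\dots<i_r=n$ with $p(a_{i_k})=a_{i_k}$ and each $(a_{i_k},a_{i_{k+1}})$ $p$-monotone;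 then $\mathrm{Ess}(p)=(\mathrm{dom}(p)\cup\mathrm{ran}(p))\setminus\{a_0,a_n\}$. A pair $(p,q)$ is piecewise elementary if $p,q$ are informative, $\min\mathrm{dom}(p)=\min\mathrm{dom}(q)$ and $\max\mathrm{dom}(p)=\max\mathrm{dom}(q)$; it is elementary if moreover $\mathrm{Fix}(p)\cap\mathrm{Fix}(q)$ consists only of this min and max. Words: $F(s,t)$ free group; for reduced $w=t^{n_k}s^{m_k}\cdots t^{n_1}s^{m_1}$, $w(p,q)(c)=q^{n_k}p^{m_k}\cdots q^{n_1}p^{m_1}(c)$ when defined (rightmost letter acts first); ''$w=t^nv$'' means the product is reduced. Liberation for elementary pairs: a triple $(p',q',w)$ with $p'\supseteq p$, $q'\supseteq q$ partial isomorphisms and $w$ reduced liberates $p$ in $(p,q)$ if: (i) $p',q'$ are informative; (ii) $\min\mathrm{dom}(p')=\min\mathrm{dom}(p)$, $\min\mathrm{dom}(q')=\min\mathrm{dom}(q)$, $\max\mathrm{dom}(p')=\max\mathrm{dom}(p)$, $\max\mathrm{dom}(q')=\max\mathrm{dom}(q)$; (iii) $w=t^nv$ with $n\neq0$; (iv) $w(p',q')(c)$ is defined for all $c\in\mathrm{Ess}(p)\cup\mathrm{Ess}(q)$ and $w(p',q')(\min(\mathrm{Ess}(p)\cup\mathrm{Ess}(q)))>\max\mathrm{Ess}(p')$; (v) there is an open interval $J$ whose right endpoint is $\max\mathrm{dom}(q)$, with $w(p',q')(c)\in J$ for all $c\in\mathrm{Ess}(p)\cup\mathrm{Ess}(q)$,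 and $J$ is $q'$-increasing if $n>0$ and $q'$-decreasing if $n<0$. It liberates $q$ if the same holds with roles of $p,q$ and of $s,t$ interchanged. Liberation for piecewise elementary pairs: let $a_0<\dots<a_m$ enumerate $\mathrm{Fix}(p)\cap\mathrm{Fix}(q)$ and $I_j=[a_j,a_{j+1}]$ (so each $(p|_{I_j},q|_{I_j})$ is elementary); $(p',q',w)$ liberates $p$ [resp. $q$] in $(p,q)$ if the min/max conditions (ii) hold and for every $j<m$ the triple $(p'|_{I_j},q'|_{I_j},w)$ liberates $p|_{I_j}$ [resp. $q|_{I_j}$] in $(p|_{I_j},q|_{I_j})$. *)

From HB Require Import structures.
From mathcomp Require Import all_boot all_order all_algebra.
Set Implicit Arguments. Unset Strict Implicit. Unset Printing Implicit Defensive.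
Import Order.TTheory GRing.Theory Num.Theory.
Local Open Scope ring_scope.

(* A finite partial map on Q, given by its graph (list of pairs (x, p x)). *)
Definition piso := seq (rat * rat).

Definition pdom (p : piso) : seq rat := map fst p.
Definition pran (p : piso) : seq rat := map snd p.

(* p is a partial isomorphism: an order-preserving bijection dom p -> ran p
   (the order condition also forces functionality and injectivity). *)
Definition is_piso (p : piso) : Prop :=
  uniq (pdom p) /\
  forall x y, x \in p -> y \in p -> (x.1 < y.1) = (x.2 < y.2).

Fixpoint papp (p : piso) (c : rat) : option rat :=
  match p with
  | [::] => None
  | x :: p' => if x.1 == c then Some x.2 else papp p' c
  end.

Definition pinv (p : piso) : piso := map (fun x => (x.2, x.1)) p.

Definition extends (p' p : piso) : Prop := {subset p <= p'}.

Definition restrict (p : piso) (a b : rat) : piso :=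
  [seq x <- p | (a <= x.1) && (x.1 <= b)].

Definition pfix (p : piso) : seq rat := [seq x.1 | x <- p & x.1 == x.2].

Definition smin (s : seq rat) : rat := foldr Order.min (head 0 s) s.
Definition smax (s : seq rat) : rat := foldr Order.max (head 0 s) s.

Definition p_increasing (p : piso) (a b : rat) : Prop :=
  [/\ a \in pdom p, b \in pdom p, papp p a = Some a, papp p b = Some b &
      forall c y, (c, y) \in p -> a < c < b -> c < y].
Definition p_decreasing (p : piso) (a b : rat) : Prop :=
  [/\ a \in pdom p, b \in pdom p, papp p a = Some a, papp p b = Some b &
      forall c y, (c, y) \in p -> a < c < b -> y < c].
Definition p_monotone (p : piso) (a b : rat) : Prop :=
  p_increasing p a b \/ p_decreasing p a b.

Definition informative (p : piso) : Prop :=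
  exists F : seq rat,
    [/\ F != [::],
        head 0 F = smin (pdom p),
        last 0 F = smax (pdom p),
        sorted (fun x y : rat => x < y) F /\ all (fun c => c \in pfix p) F &
        forall k, (k.+1 < size F)%N -> p_monotone p (nth 0 F k) (nth 0 F k.+1)].

Definition Ess (p : piso) : seq rat :=
  [seq c <- pdom p ++ pran p | (c != smin (pdom p)) && (c != smax (pdom p))].

Definition pw_elementary (p q : piso) : Prop :=
  [/\ informative p, informative q,
      smin (pdom p) = smin (pdom q) & smax (pdom p) = smax (pdom q)].

Inductive letter := LS | LSi | LT | LTi.

Definition inv_pair (x y : letter) : bool :=
  match x, y with
  | LS, LSi | LSi, LS | LT, LTi | LTi, LT => true
  | _, _ => false
  end.

(* a word is a list of letters, leftmost letter first *)
Fixpoint reduced (w : seq letter) : bool :=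
  match w with
  | x :: ((y :: _) as w') => ~~ inv_pair x y && reduced w'
  | _ => true
  end.

Definition act (p q : piso) (l : letter) (c : rat) : option rat :=
  match l with
  | LS => papp p c
  | LSi => papp (pinv p) c
  | LT => papp q c
  | LTi => papp (pinv q) c
  end.

(* w(p,q)(c): the rightmost letter acts first *)
Definition weval (p q : piso) (w : seq letter) (c : rat) : option rat :=
  foldr (fun l acc => obind (act p q l) acc) (Some c) w.

(* w = t^n v (reduced) with n <> 0 *)
Definition starts_t (w : seq letter) : bool :=
  match w with LT :: _ | LTi :: _ => true | _ => false end.

Definition swap_letter (l : letter) : letter :=
  match l with LS => LT | LSi => LTi | LT => LS | LTi => LSi end.

Definition lib_p_el (p q p' q' : piso) (w : seq letter) : Prop :=
  let E := Ess p ++ Ess q in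
  [/\ is_piso p' /\ is_piso q' /\ extends p' p /\ extends q' q /\ reduced w,
      informative p' /\ informative q',
      smin (pdom p') = smin (pdom p) /\ smin (pdom q') = smin (pdom q) /\
                 smax (pdom p') = smax (pdom p) /\ smax (pdom q') = smax (pdom q),
      starts_t w &
      (( (forall c, c \in E -> weval p' q' w c != None) /\
                 (forall m, m \in E -> (forall c, c \in E -> m <= c) ->
                    forall y, weval p' q' w m = Some y ->
                    forall x, x \in Ess p' -> x < y)) /\
      (exists a, a < smax (pdom q) /\
                 (forall c y, c \in E -> weval p' q' w c = Some y ->
                    a < y < smax (pdom q)) /\
                 match w with
                 | LT :: _ => p_increasing q' a (smax (pdom q))
                 | LTi :: _ => p_decreasing q' a (smax (pdom q))
                 | _ => False
                 end))].

Definition common_fix (p q : piso) : seq rat :=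
  sort (fun x y : rat => x <= y) (undup [seq c <- pfix p | c \in pfix q]).

Definition lib_p (p q p' q' : piso) (w : seq letter) : Prop :=
  let A := common_fix p q in
  [/\ is_piso p' /\ is_piso q' /\ extends p' p /\ extends q' q /\ reduced w,
      smin (pdom p') = smin (pdom p), smin (pdom q') = smin (pdom q),
      smax (pdom p') = smax (pdom p) /\ smax (pdom q') = smax (pdom q) &
      forall j, (j.+1 < size A)%N ->
        let a := nth 0 A j in let b := nth 0 A j.+1 in
        lib_p_el (restrict p a b) (restrict q a b)
                 (restrict p' a b) (restrict q' a b) w].

Definition lib_q (p q p' q' : piso) (w : seq letter) : Prop :=
  lib_p q p q' p' (map swap_letter w).

Definition starts_s (w : seq letter) : bool :=
  match w with LS :: _ | LSi :: _ => true | _ => false end.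

From mathcomp Require Import all_boot all_order all_algebra.
Set Implicit Arguments. Unset Strict Implicit. Unset Printing Implicit Defensive.
Import Order.TTheory GRing.Theory Num.Theory.
Local Open Scope ring_scope.

(* Liberation is extended one letter of [u] at a time, separately inside each
   elementary piece [[a_j, a_(j+1)]], all new points lying strictly inside the
   piece.  Within a piece [[a, b]] the invariant is: the images of the essential
   points under the current word lie in a monotone gap [(f, b)] of the map read
   by its first letter, above every essential point of the other map.
   Prepending the same letter again, that map is extended inside its gap,
   pushing each image further towards [b].  Prepending a letter of the other
   map, a new fixed point [f'] of that map is first planted above its essential
   points and below the current images; then the map is extended monotonically
   on [(f', b)], sending the images above everything essential in the first map.
   Informativity is tracked through an equivalent form, "points moved in opposite
   directions are separated by a fixed point", which such extensions preserve.
   The statement for [q] follows by exchanging [p, q] and [s, t]. *)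

Lemma foldr_min_le (d : rat) s :
  foldr Order.min d s <= d /\ {in s, forall x, foldr Order.min d s <= x}.
Proof.
elim: s => [|y s [IHd IHs]] //=; split; first by rewrite ge_min IHd orbT.
by move=> x; rewrite in_cons => /predU1P[->|/IHs xs]; rewrite ge_min ?lexx ?xs ?orbT.
Qed.

Lemma foldr_max_ge (d : rat) s :
  d <= foldr Order.max d s /\ {in s, forall x, x <= foldr Order.max d s}.
Proof.
elim: s => [|y s [IHd IHs]] //=; split; first by rewrite le_max IHd orbT.
by move=> x; rewrite in_cons => /predU1P[->|/IHs xs]; rewrite le_max ?lexx ?xs ?orbT.
Qed.

Lemma foldr_min_mem (d : rat) s : foldr Order.min d s \in d :: s.
Proof.
elim: s => [|y s IH] /=; first exact: mem_head.
rewrite /Order.min; case: ifP => _; first by rewrite !inE eqxx orbT.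
by move: IH; rewrite !inE => /orP[->|->]; rewrite ?orbT.
Qed.

Lemma foldr_max_mem (d : rat) s : foldr Order.max d s \in d :: s.
Proof.
elim: s => [|y s IH] /=; first exact: mem_head.
rewrite /Order.max; case: ifP => _; last by rewrite !inE eqxx orbT.
by move: IH; rewrite !inE => /orP[->|->]; rewrite ?orbT.
Qed.

Lemma smin_le s x : x \in s -> smin s <= x.
Proof. exact: (proj2 (foldr_min_le _ s)). Qed.

Lemma smax_ge s x : x \in s -> x <= smax s.
Proof. exact: (proj2 (foldr_max_ge _ s)). Qed.

Lemma smin_mem s : s != [::] -> smin s \in s.
Proof.
case: s => [//|y s] _; rewrite /smin.
by have := foldr_min_mem y (y :: s); rewrite inE => /predU1P[->|]; rewrite ?mem_head.
Qed.

Lemma smax_mem s : s != [::] -> smax s \in s.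
Proof.
case: s => [//|y s] _; rewrite /smax.
by have := foldr_max_mem y (y :: s); rewrite inE => /predU1P[->|]; rewrite ?mem_head.
Qed.

Lemma smin_eq s m : m \in s -> {in s, forall x, m <= x} -> smin s = m.
Proof.
move=> ms lem; apply/le_anti; rewrite smin_le // lem // smin_mem //.
by apply: contraTneq ms => ->.
Qed.

Lemma smax_eq s m : m \in s -> {in s, forall x, x <= m} -> smax s = m.
Proof.
move=> ms gem; apply/le_anti; rewrite smax_ge // gem // smax_mem //.
by apply: contraTneq ms => ->.
Qed.

Lemma smin_gt s t : s != [::] -> {in s, forall x, t < x} -> t < smin s.
Proof. by move=> s0 gt; apply/gt/smin_mem. Qed.

Lemma smax_lt s t : s != [::] -> {in s, forall x, x < t} -> smax s < t.
Proof. by move=> s0 lt; apply/lt/smax_mem. Qed.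

Lemma sorted_lt_nth (F : seq rat) i j : sorted <%R F ->
  (i < size F)%N -> (j < size F)%N -> (i < j)%N -> nth 0 F i < nth 0 F j.
Proof. by move=> sF; apply: sorted_ltn_nth => //; apply: lt_trans. Qed.

Lemma sorted_le_nth (F : seq rat) i j : sorted <%R F ->
  (i < size F)%N -> (j < size F)%N -> (i <= j)%N -> nth 0 F i <= nth 0 F j.
Proof.
move=> sF iF jF; rewrite leq_eqVlt => /predU1P[->//|ij].
exact/ltW/sorted_lt_nth.
Qed.

Lemma piso_lt (A : piso) x y :
  is_piso A -> x \in A -> y \in A -> (x.1 < y.1) = (x.2 < y.2).
Proof. by case=> _; apply. Qed.

Lemma piso_functional (A : piso) c y y' :
  is_piso A -> (c, y) \in A -> (c, y') \in A -> y = y'.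
Proof.
move=> PA cy cy'; have := piso_lt PA cy cy'; have := piso_lt PA cy' cy.
by rewrite /= ltxx; case: ltgtP.
Qed.

Lemma piso_injective (A : piso) c c' y :
  is_piso A -> (c, y) \in A -> (c', y) \in A -> c = c'.
Proof.
move=> PA cy c'y; have := piso_lt PA cy c'y; have := piso_lt PA c'y cy.
by rewrite /= ltxx; case: ltgtP.
Qed.

Lemma papp_mem (A : piso) c y : papp A c = Some y -> (c, y) \in A.
Proof.
elim: A => [//|[c0 y0] A IH] /=; case: eqP => [-> [<-]|_ /IH]; first exact: mem_head.
by rewrite inE => ->; rewrite orbT.
Qed.

Lemma piso_papp (A : piso) c y : is_piso A -> (c, y) \in A -> papp A c = Some y.
Proof.
move=> PA cy; elim: A PA cy => [//|[c0 y0] A IH] PA /=.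
have PA' : is_piso A.
  case: PA => /= /andP[_ uA] ltA; split=> // x z xA zA.
  by apply: ltA; rewrite inE ?xA ?zA orbT.
case: eqP => [e cy|ne]; first by subst c0; congr Some; apply: piso_functional PA (mem_head _ _) cy.
by rewrite inE => /predU1P[[/esym/ne]|/(IH PA')].
Qed.

Lemma pdomP (A : piso) c : reflect (exists y, (c, y) \in A) (c \in pdom A).
Proof.
apply: (iffP mapP) => [[[c' y] cy /= ->]|[y cy]]; first by exists y.
by exists (c, y).
Qed.

Lemma pranP (A : piso) y : reflect (exists c, (c, y) \in A) (y \in pran A).
Proof.
apply: (iffP mapP) => [[[c y'] cy /= ->]|[c cy]]; first by exists c.
by exists (c, y).
Qed.

Lemma mem_pinv (A : piso) x y : ((x, y) \in pinv A) = ((y, x) \in A).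
Proof.
apply/mapP/idP => [[[y' x'] yx [-> ->]] //|yx].
by exists (y, x).
Qed.

Lemma pinvK : involutive pinv.
Proof. by elim=> [//|[c y] A /= ->]. Qed.

Lemma piso_pinv (A : piso) : is_piso A -> is_piso (pinv A).
Proof.
move=> PA; split.
  have uA : uniq A by case: PA => /map_uniq.
  rewrite /pdom -map_comp map_inj_in_uniq // => -[c y] [c' y'] cy c'y' /= eyy'.
  by rewrite -eyy' in c'y'; rewrite (piso_injective PA cy c'y') eyy'.
by move=> [x1 x2] [y1 y2]; rewrite !mem_pinv => xA yA; rewrite (piso_lt PA xA yA).
Qed.

Lemma piso_cons (A : piso) c z : is_piso A -> c \notin pdom A ->
  (forall x, x \in A -> (x.1 < c) = (x.2 < z) /\ (c < x.1) = (z < x.2)) ->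
  is_piso ((c, z) :: A).
Proof.
move=> [uA ltA] cA ltc; split; first by rewrite /= cA.
move=> x y; rewrite !inE => /predU1P[->|xA] /predU1P[->|yA] //=.
- by rewrite !ltxx.
- by case: (ltc _ yA).
- by case: (ltc _ xA).
- exact: ltA.
Qed.

Lemma mem_pfix (A : piso) c : (c \in pfix A) = ((c, c) \in A).
Proof.
apply/mapP/idP => [[[x1 x2]]|cc]; last by exists (c, c); rewrite // mem_filter eqxx.
by rewrite mem_filter /= => /andP[/eqP-> ?] ->.
Qed.

Lemma fix_lt (A : piso) f x : is_piso A -> (f, f) \in A -> x \in A ->
  (x.1 < f) = (x.2 < f) /\ (f < x.1) = (f < x.2).
Proof. by move=> PA ff xA; split; [apply: piso_lt PA xA ff|apply: piso_lt PA ff xA]. Qed.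

Lemma fix_snd (A : piso) f x : is_piso A -> (f, f) \in A -> x \in A -> x.1 = f -> x.2 = f.
Proof. by case: x => x1 x2 PA ff xA /= e; rewrite e in xA; apply: piso_functional PA xA ff. Qed.

Lemma fix_fst (A : piso) f x : is_piso A -> (f, f) \in A -> x \in A -> x.2 = f -> x.1 = f.
Proof. by case: x => x1 x2 PA ff xA /= e; rewrite e in xA; apply: piso_injective PA xA ff. Qed.

Definition orient (d : bool) (A : piso) : piso := if d then A else pinv A.

Definition pos_letter (l : letter) : bool := if l is (LS | LT) then true else false.
Definition s_letter (l : letter) : bool := if l is (LS | LSi) then true else false.

Definition letter_map (P Q : piso) (l : letter) : piso := if s_letter l then P else Q.
Definition other_map (P Q : piso) (l : letter) : piso := if s_letter l then Q else P.

Lemma act_letter (P Q : piso) l :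
  act P Q l =1 papp (orient (pos_letter l) (letter_map P Q l)).
Proof. by case: l. Qed.

Lemma orientK d : involutive (orient d).
Proof. by case: d => // A; rewrite /= pinvK. Qed.

Lemma orient_cat d (A B : piso) : orient d (A ++ B) = orient d A ++ orient d B.
Proof. by case: d => //; apply: map_cat. Qed.

Lemma piso_orient d (A : piso) : is_piso A -> is_piso (orient d A).
Proof. by case: d => //; apply: piso_pinv. Qed.

Lemma mem_orient d (A : piso) x :
  (x \in orient d A) = (if d then x \in A else (x.2, x.1) \in A).
Proof. by case: d; case: x => //= x1 x2; rewrite mem_pinv. Qed.

Lemma orient_subset d (A B : piso) : {subset A <= B} -> {subset orient d A <= orient d B}.
Proof. by move=> AB x; rewrite !mem_orient; case: d; apply: AB. Qed.

Lemma piso_letter_map (P Q : piso) l : is_piso P -> is_piso Q -> is_piso (letter_map P Q l).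
Proof. by rewrite /letter_map; case: s_letter. Qed.

Lemma letter_map_swap (P Q : piso) l l' :
  s_letter l != s_letter l' -> letter_map P Q l = other_map P Q l'.
Proof. by rewrite /letter_map /other_map; case: s_letter; case: s_letter. Qed.

Lemma weval_subset (P Q P' Q' : piso) v c y : is_piso P' -> is_piso Q' ->
  {subset P <= P'} -> {subset Q <= Q'} ->
  weval P Q v c = Some y -> weval P' Q' v c = Some y.
Proof.
move=> PP' PQ' PP QQ; elim: v y => [//|l v IH] y /=.
case E: (weval P Q v c) => [y0|//]; rewrite (IH y0 E) /= !act_letter => /papp_mem ly.
apply: piso_papp; first exact/piso_orient/piso_letter_map.
by apply: orient_subset ly; rewrite /letter_map; case: s_letter.
Qed.

Lemma weval_lt (P Q : piso) v c c' y y' : is_piso P -> is_piso Q ->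
  weval P Q v c = Some y -> weval P Q v c' = Some y' -> c < c' -> y < y'.
Proof.
move=> PP PQ; elim: v y y' => [|l v IH] y y' /=; first by move=> [<-] [<-].
case E: (weval P Q v c) => [y0|//]; case E': (weval P Q v c') => [y0'|//] /=.
rewrite !act_letter => /papp_mem ly /papp_mem ly' cc'.
have PL := piso_orient (pos_letter l) (piso_letter_map l PP PQ).
by rewrite -(piso_lt PL ly ly'); apply: IH E E' cc'.
Qed.

(** * One-sided extensions *)

Lemma exists_between (Ls Us : seq rat) :
  (forall l u, l \in Ls -> u \in Us -> l < u) ->
  exists z, {in Ls, forall l, l < z} /\ {in Us, forall u, z < u}.
Proof.
move=> LU; have [->|Ls0] := eqVneq Ls [::].
  exists (smin Us - 1); split=> // u /smin_le; apply: lt_le_trans.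
  by rewrite gtrBl ltr01.
have [->|Us0] := eqVneq Us [::].
  exists (smax Ls + 1); split=> // l /smax_ge /le_lt_trans; apply.
  by rewrite ltrDl ltr01.
have [mL mU] := midf_lt (LU _ _ (smax_mem Ls0) (smin_mem Us0)).
exists ((smax Ls + smin Us) / 2); split=> [l /smax_ge|u /smin_le].
  by move/le_lt_trans; apply.
exact: lt_le_trans.
Qed.

Lemma piso_extend_point (R : piso) K y : is_piso R ->
  (forall x, x \in R -> y <= x.1 -> K < x.2 /\ y < x.2) ->
  exists z, exists2 N : piso, is_piso (N ++ R) &
    [/\ (y, z) \in N ++ R, K < z, y < z & {subset N <= [:: (y, z)]}].
Proof.
move=> PR above; have [/pdomP[z yz]|yR] := boolP (y \in pdom R).
  by have [Kz yz'] := above _ yz (lexx _); exists z, [::].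
pose Ls := y :: K :: [seq x.2 | x <- R & x.1 < y].
pose Us := [seq x.2 | x <- R & y < x.1].
have [|z [Lz zU]] := exists_between (Ls := Ls) (Us := Us).
  move=> l u Ll /mapP[x2 + ->]; rewrite mem_filter => /andP[yx x2R].
  have [Kx yx'] := above _ x2R (ltW yx).
  move: Ll; rewrite !inE => /predU1P[->//|/predU1P[->//|/mapP[x1 + ->]]].
  rewrite mem_filter => /andP[x1y x1R].
  by rewrite -(piso_lt PR x1R x2R) (lt_trans x1y yx).
have below x : x \in R -> x.1 < y -> x.2 < z.
  by move=> xR xy; apply: Lz; rewrite !inE map_f ?mem_filter ?xy ?orbT.
have beyond x : x \in R -> y < x.1 -> z < x.2.
  by move=> xR yx; apply: zU; rewrite map_f ?mem_filter ?yx.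
exists z, [:: (y, z)]; last first.
  by split; [exact: mem_head|apply: Lz; rewrite !inE eqxx ?orbT..|].
apply: piso_cons => // x xR; case: (ltgtP x.1 y) => [xy|yx|xy].
- by rewrite (below _ xR xy) (lt_gtF (below _ xR xy)).
- by rewrite (beyond _ xR yx) (lt_gtF (beyond _ xR yx)).
- by case/pdomP: yR; exists x.2; rewrite -xy -surjective_pairing.
Qed.

Lemma piso_extend_above (R : piso) K (ys : seq rat) : is_piso R ->
  (forall y x, y \in ys -> x \in R -> y <= x.1 -> K < x.2 /\ y < x.2) ->
  exists2 N : piso, is_piso (N ++ R) &
    (forall x, x \in N -> [/\ x.1 \in ys, K < x.2 & x.1 < x.2]) /\
    (forall y, y \in ys -> exists z, [/\ (y, z) \in N ++ R, K < z & y < z]).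
Proof.
move=> PR; elim: ys => [|y ys IH] above; first by exists [::].
have [|N PN [newN imN]] := IH.
  by move=> y' x y'ys; apply: above; rewrite inE y'ys orbT.
have [|z [N' PN' [yz Kz ltyz N'y]]] := @piso_extend_point _ K y PN.
  move=> x; rewrite mem_cat => /orP[/newN[x1ys Kx ltx] yx|xR]; last exact/above/xR/mem_head.
  by split=> //; apply: le_lt_trans yx ltx.
exists (N' ++ N); rewrite -catA //; split=> [x|y'].
  rewrite mem_cat => /orP[/N'y|/newN[? ? ?]]; last by rewrite inE; split=> //; apply/orP; right.
  by rewrite mem_seq1 => /eqP->; rewrite mem_head.
rewrite inE => /predU1P[->|/imN[z' [y'z' ? ?]]]; first by exists z.
by exists z'; rewrite mem_cat y'z' orbT.
Qed.

(** * Informativity as separation by fixed points *)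

Definition opp_disp (x y : rat * rat) : bool :=
  (x.1 < x.2) && (y.2 < y.1) || (x.2 < x.1) && (y.1 < y.2).

(* Equivalent to [informative] for partial isomorphisms (see below), but
   visibly preserved by extensions inside a monotone gap. *)
Definition fix_separated (A : piso) : Prop :=
  [/\ smin (pdom A) \in pfix A, smax (pdom A) \in pfix A &
      forall x y, x \in A -> y \in A -> x.1 < y.1 -> opp_disp x y ->
        exists2 f, (f, f) \in A & x.1 < f < y.1].

Definition monotone_gap (d : bool) (A : piso) (f b : rat) : Prop :=
  [/\ (f, f) \in A, (b, b) \in A &
      forall x, x \in A -> f < x.1 < b -> if d then x.1 < x.2 else x.2 < x.1].

Lemma opp_dispFl x y : x.1 = x.2 -> opp_disp x y = false.
Proof. by rewrite /opp_disp => ->; rewrite ltxx. Qed.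

Lemma opp_dispFr x y : y.1 = y.2 -> opp_disp x y = false.
Proof. by rewrite /opp_disp => ->; rewrite ltxx !andbF. Qed.

Lemma gap_opp_dispF d (A : piso) f b x y : monotone_gap d A f b ->
  x \in A -> y \in A -> f < x.1 < b -> f < y.1 < b -> opp_disp x y = false.
Proof.
case=> _ _ mono xA yA /(mono _ xA) dx /(mono _ yA) dy; rewrite /opp_disp.
by case: d {mono} dx dy => dx dy; rewrite !(lt_gtF dx, lt_gtF dy, dx, dy) ?andbF.
Qed.

Lemma p_increasingE (A : piso) f b :
  is_piso A -> p_increasing A f b <-> monotone_gap true A f b.
Proof.
move=> PA; split=> [[_ _ /papp_mem ff /papp_mem bb inc]|[ff bb inc]].
  by split=> //; case=> c y cy; apply: inc.
split; [by apply/pdomP; exists f|by apply/pdomP; exists b|exact: piso_papp..|].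
by move=> c y cy; apply: (inc (c, y)).
Qed.

Lemma p_decreasingE (A : piso) f b :
  is_piso A -> p_decreasing A f b <-> monotone_gap false A f b.
Proof.
move=> PA; split=> [[_ _ /papp_mem ff /papp_mem bb dec]|[ff bb dec]].
  by split=> //; case=> c y cy; apply: dec.
split; [by apply/pdomP; exists f|by apply/pdomP; exists b|exact: piso_papp..|].
by move=> c y cy; apply: (dec (c, y)).
Qed.

Lemma p_monotoneE (A : piso) f b :
  is_piso A -> p_monotone A f b <-> exists d, monotone_gap d A f b.
Proof.
move=> PA; split=> [[/(p_increasingE _ _ PA)|/(p_decreasingE _ _ PA)] gap|[[] gap]].
- by exists true.
- by exists false.
- by left; apply/p_increasingE.
- by right; apply/p_decreasingE.
Qed.

Lemma fix_chain_separates (A : piso) F : is_piso A -> sorted <%R F ->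
  {in F, forall c, (c, c) \in A} ->
  (forall k, (k.+1 < size F)%N -> p_monotone A (nth 0 F k) (nth 0 F k.+1)) ->
  forall x y, x \in A -> y \in A -> head 0 F <= x.1 -> y.1 <= last 0 F ->
    x.1 < y.1 -> opp_disp x y -> exists2 f, (f, f) \in A & x.1 < f < y.1.
Proof.
move=> PA; elim: F => [|f0 [|f1 F] IH] sF fixF monoF x y xA yA hx ly xy opp.
- by have := le_lt_trans hx (lt_le_trans xy ly); rewrite ltxx.
- by have := le_lt_trans hx (lt_le_trans xy ly); rewrite ltxx.
have f1A : (f1, f1) \in A by apply/fixF; rewrite !inE eqxx orbT.
have [f1x|xf1] := leP f1 x.1.
  apply: (IH _ _ _ _ _ xA yA) => //; first by case/andP: sF.
    by move=> c cF; apply: fixF; rewrite inE cF orbT.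
  by move=> k; apply: (monoF k.+1).
have [f1y|] := ltP f1 y.1; first by exists f1; rewrite ?xf1.
rewrite le_eqVlt => /predU1P[yf1|yf1].
  by rewrite opp_dispFr ?(fix_snd PA f1A yA yf1) in opp.
have [d gap] := (p_monotoneE _ _ PA).1 (monoF 0%N isT).
move: hx; rewrite /= le_eqVlt => /predU1P[f0x|f0x].
  have f0A : (f0, f0) \in A by apply/fixF/mem_head.
  by rewrite opp_dispFl ?(fix_snd PA f0A xA (esym f0x)) in opp.
by rewrite (gap_opp_dispF gap xA yA) ?f0x ?xf1 ?yf1 ?(lt_trans f0x xy) in opp.
Qed.

Lemma informative_fix_separated (A : piso) :
  is_piso A -> informative A -> fix_separated A.
Proof.
move=> PA [F [F0 hF lF [sF /allP fixF] monoF]].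
have {}fixF : {in F, forall c, (c, c) \in A} by move=> c /fixF; rewrite mem_pfix.
have [headF lastF] : head 0 F \in F /\ last 0 F \in F.
  by case: F F0 {hF lF sF monoF fixF} => // f F _; split; [exact: mem_head|exact: (mem_last f F)].
split; [by rewrite -hF mem_pfix fixF|by rewrite -lF mem_pfix fixF|].
move=> x y xA yA; apply: (fix_chain_separates PA sF fixF monoF xA yA).
  by rewrite hF; apply/smin_le/pdomP; exists x.2; rewrite -surjective_pairing.
by rewrite lF; apply/smax_ge/pdomP; exists y.2; rewrite -surjective_pairing.
Qed.

Lemma fix_free_gap_monotone (A : piso) f0 f1 : is_piso A -> fix_separated A ->
  (f0, f0) \in A -> (f1, f1) \in A -> (forall f, (f, f) \in A -> ~~ (f0 < f < f1)) ->
  exists d, monotone_gap d A f0 f1.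
Proof.
move=> PA [_ _ sep] f0A f1A nofix.
have moved x : x \in A -> f0 < x.1 < f1 -> x.1 != x.2.
  move=> xA gx; apply/eqP => ex.
  have : (x.1, x.1) \in A by rewrite {2}ex -surjective_pairing.
  by move/nofix; rewrite gx.
have [/hasP[x xA /andP[gx incx]]|noinc] :=
    boolP (has (fun x => (f0 < x.1 < f1) && (x.1 < x.2)) A); last first.
  exists false; split=> // x xA gx; rewrite lt_neqAle eq_sym moved //=.
  by rewrite leNgt; apply: contraNN (hasPn noinc x xA) => ->; rewrite gx.
exists true; split=> // y yA gy; rewrite ltNge le_eqVlt eq_sym (negbTE (moved _ yA gy)) /=.
apply/negP => decy.
have opp_xy : opp_disp x y by rewrite /opp_disp incx decy.
have opp_yx : opp_disp y x by rewrite /opp_disp incx decy orbT.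
move: gx gy => /andP[f0x xf1] /andP[f0y yf1].
have [xy|yx|exy] := ltgtP x.1 y.1.
- have [f fA /andP[xf fy]] := sep _ _ xA yA xy opp_xy.
  by move: (nofix _ fA); rewrite (lt_trans f0x xf) (lt_trans fy yf1).
- have [f fA /andP[yf fx]] := sep _ _ yA xA yx opp_yx.
  by move: (nofix _ fA); rewrite (lt_trans f0y yf) (lt_trans fx xf1).
- have exy2 : x.2 = y.2.
    by apply: (piso_functional PA (c := x.1)); rewrite -?surjective_pairing // exy -surjective_pairing.
  by rewrite -exy -exy2 in decy; move: (lt_trans incx decy); rewrite ltxx.
Qed.

Lemma sorted_head_le (F : seq rat) c : sorted <%R F -> c \in F -> head 0 F <= c.
Proof.
move=> sF cF; rewrite -nth0 -(nth_index 0 cF).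
by apply: sorted_le_nth; rewrite ?index_mem //; case: F cF {sF}.
Qed.

Lemma sorted_last_ge (F : seq rat) c : sorted <%R F -> c \in F -> c <= last 0 F.
Proof.
move=> sF cF; have F0 : (0 < size F)%N by case: F cF {sF}.
rewrite -nth_last -(nth_index 0 cF); apply: sorted_le_nth; rewrite ?index_mem //.
  by rewrite prednK.
by rewrite -ltnS prednK // index_mem.
Qed.

Lemma fix_separated_informative (A : piso) :
  is_piso A -> fix_separated A -> informative A.
Proof.
move=> PA sepA; have [m1 m2 _] := sepA.
pose F := sort <=%R (undup (pfix A)).
have memF c : (c \in F) = ((c, c) \in A) by rewrite mem_sort mem_undup mem_pfix.
have sF : sorted <%R F by rewrite sort_lt_sorted undup_uniq.
have inA c : c \in F -> c \in pdom A by rewrite memF => cc; apply/pdomP; exists c.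
have F0 : F != [::] by apply: contraTneq m1 => F0; rewrite mem_pfix -memF F0.
have [headF lastF] : head 0 F \in F /\ last 0 F \in F.
  by case: F F0 {memF sF inA} => // f F _; split; [exact: mem_head|exact: (mem_last f F)].
exists F; split=> //.
- apply/le_anti; rewrite (sorted_head_le sF) ?memF -?mem_pfix //=.
  exact/smin_le/inA.
- apply/le_anti; rewrite (sorted_last_ge sF) ?memF -?mem_pfix // andbT.
  exact/smax_ge/inA.
- by split=> //; apply/allP => c; rewrite memF mem_pfix.
move=> k kF; set f0 := nth 0 F k; set f1 := nth 0 F k.+1.
have f0A : (f0, f0) \in A by rewrite -memF mem_nth // ltnW.
have f1A : (f1, f1) \in A by rewrite -memF mem_nth.
apply/(p_monotoneE _ _ PA)/fix_free_gap_monotone => // f.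
rewrite -memF => fF; rewrite -(nth_index 0 fF) /f0 /f1 negb_and -!leNgt.
have iF : (index f F < size F)%N by rewrite index_mem.
have [ki|ik] := ltnP k (index f F); apply/orP; [right|left].
  exact: sorted_le_nth.
by apply: sorted_le_nth => //; rewrite ltnW.
Qed.

Lemma fix_separated_gap_extend (A N : piso) d f b :
  is_piso (N ++ A) -> fix_separated A ->
  smin (pdom (N ++ A)) = smin (pdom A) -> smax (pdom (N ++ A)) = smax (pdom A) ->
  monotone_gap d (N ++ A) f b -> (forall x, x \in N -> x.1 = x.2 \/ f < x.1 < b) ->
  fix_separated (N ++ A).
Proof.
move=> PNA [m1 m2 sepA] e1 e2 gap newN; have [fNA bNA _] := gap.
have sub : {subset A <= N ++ A} by move=> x xA; rewrite mem_cat xA orbT.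
split; [by rewrite e1 mem_pfix sub -?mem_pfix|by rewrite e2 mem_pfix sub -?mem_pfix|].
have fixed_at g x : (g, g) \in N ++ A -> x \in N ++ A -> x.1 = g -> x.1 = x.2.
  by move=> gg xNA xg; rewrite (fix_snd PNA gg xNA xg).
have in_gap x y : x \in N ++ A -> y \in N ++ A -> f < x.1 < b -> f < y.1 < b ->
    opp_disp x y = false.
  exact: gap_opp_dispF gap.
move=> x y; rewrite !mem_cat => /orP[xN|xA] /orP[yN|yA] xy opp.
- case: (newN _ xN) => [fx|gx]; first by rewrite opp_dispFl in opp.
  case: (newN _ yN) => [fy|gy]; first by rewrite opp_dispFr in opp.
  by rewrite in_gap ?mem_cat ?xN ?yN in opp.
- case: (newN _ xN) => [fx|/andP[fx xb]]; first by rewrite opp_dispFl in opp.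
  case: (ltgtP y.1 b) => [yb|by_|yb].
  + by rewrite in_gap ?mem_cat ?xN ?yA ?orbT ?fx ?xb ?yb ?(lt_trans fx xy) in opp.
  + by exists b; rewrite ?xb.
  + by rewrite opp_dispFr // in opp; apply: (fixed_at b); rewrite // mem_cat yA orbT.
- case: (newN _ yN) => [fy|/andP[fy yb]]; first by rewrite opp_dispFr in opp.
  case: (ltgtP x.1 f) => [xf|fx|xf].
  + by exists f; rewrite ?xf.
  + by rewrite in_gap ?mem_cat ?yN ?xA ?orbT ?fy ?yb ?fx ?(lt_trans xy yb) in opp.
  + by rewrite opp_dispFl // in opp; apply: (fixed_at f); rewrite // mem_cat xA orbT.
- by have [g gA gxy] := sepA _ _ xA yA xy opp; exists g; rewrite ?sub.
Qed.

(** * Framed partial isomorphisms and their gaps *)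

Definition framed (a b : rat) (A : piso) : Prop :=
  [/\ (a, a) \in A, (b, b) \in A & forall x, x \in A -> a <= x.1 <= b].

Lemma framed_snd a b (A : piso) x : is_piso A -> framed a b A -> x \in A -> a <= x.2 <= b.
Proof.
move=> PA [aA bA inab] xA; have /andP[ax xb] := inab _ xA.
have [ltxa _] := fix_lt PA aA xA; have [_ ltbx] := fix_lt PA bA xA.
by rewrite !leNgt -ltxa -ltbx -!leNgt ax xb.
Qed.

Lemma framed_smin a b (A : piso) : framed a b A -> smin (pdom A) = a.
Proof.
case=> aA _ inab; apply: smin_eq => [|c /pdomP[y /inab /andP[]//]].
by apply/pdomP; exists a.
Qed.

Lemma framed_smax a b (A : piso) : framed a b A -> smax (pdom A) = b.
Proof.
case=> _ bA inab; apply: smax_eq => [|c /pdomP[y /inab /andP[]//]].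
by apply/pdomP; exists b.
Qed.

Lemma framed_cat a b (N A : piso) : framed a b A ->
  (forall x, x \in N -> a <= x.1 <= b) -> framed a b (N ++ A).
Proof.
case=> aA bA inab inabN; split; rewrite ?mem_cat ?aA ?bA ?orbT //.
by move=> x; rewrite mem_cat => /orP[/inabN|/inab].
Qed.

Lemma framed_coord a b (A : piso) x c : framed a b A -> x \in A -> c = x.1 \/ c = x.2 ->
  [\/ c = a, c = b | c \in Ess A].
Proof.
move=> fr xA xc; rewrite /Ess (framed_smin fr) (framed_smax fr) mem_filter mem_cat.
have -> : (c \in pdom A) || (c \in pran A).
  by case: xc => ->; apply/orP; [left; apply/pdomP|right; apply/pranP];
     [exists x.2|exists x.1]; rewrite -surjective_pairing.
by case: eqP => [|_]; [constructor 1|case: eqP => [|_]; [constructor 2|constructor 3]].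
Qed.

Lemma Ess_framed a b (A : piso) e : is_piso A -> framed a b A -> e \in Ess A -> a < e < b.
Proof.
move=> PA fr; rewrite /Ess (framed_smin fr) (framed_smax fr) mem_filter mem_cat.
case/andP=> /andP[ea eb] /orP[/pdomP[y ey]|/pranP[c ce]].
  by case: fr => _ _ /(_ _ ey) /andP[]; rewrite !lt_neqAle eq_sym ea eb => -> ->.
by have /andP[] := framed_snd PA fr ce; rewrite !lt_neqAle eq_sym ea eb => -> ->.
Qed.

Lemma monotone_gap_orient d (A : piso) f b :
  is_piso A -> monotone_gap true (orient d A) f b <-> monotone_gap d A f b.
Proof.
case: d => // PA; rewrite /monotone_gap !mem_pinv; split=> -[fA bA mono]; split=> //.
  move=> x xA gx; have [_ ltfx] := fix_lt PA fA xA; have [ltxb _] := fix_lt PA bA xA.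
  by apply: (mono (x.2, x.1)); rewrite ?mem_pinv -?surjective_pairing //= -ltfx -ltxb.
move=> [x1 x2]; rewrite mem_pinv => xA /= gx.
have [_ ltfx] := fix_lt PA fA xA; have [ltxb _] := fix_lt PA bA xA.
by apply: (mono (x2, x1)); rewrite //= ltfx ltxb.
Qed.

Definition inside (a b : rat) (N : piso) : Prop :=
  forall x, x \in N -> a < x.1 < b /\ a < x.2 < b.

Definition framed_piso (a b : rat) (A : piso) : Prop :=
  [/\ is_piso A, framed a b A & fix_separated A].

Definition gap_extension a b d f K (ys : seq rat) (M N : piso) : Prop :=
  [/\ inside a b N, framed_piso a b (N ++ M), monotone_gap d (N ++ M) f b &
      forall y, y \in ys -> exists z,
        [/\ papp (orient d (N ++ M)) y = Some z, y < z, K < z & z < b]].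

Lemma gap_extend (R : piso) f b K (ys : seq rat) : is_piso R -> monotone_gap true R f b ->
  {in R, forall x, f < x.1 < b -> K < x.2} -> K < b -> {in ys, forall y, f < y < b} ->
  exists2 N : piso, is_piso (N ++ R) &
    (forall x, x \in N -> f < x.1 < b /\ x.1 < x.2 < b) /\
    (forall y, y \in ys -> exists z, [/\ (y, z) \in N ++ R, y < z, K < z & z < b]).
Proof.
move=> PR [fR bR incR] Kgap Kb ysgap.
have [|N PNR [newN imN]] := @piso_extend_above _ K ys PR.
  move=> y x /ysgap/andP[fy yb] xR yx.
  have [xb|bx] := ltP x.1 b.
    have gx : f < x.1 < b by rewrite xb (lt_le_trans fy yx).
    by split; [apply: Kgap|apply: le_lt_trans yx (incR _ xR gx)].
  have [_ ltbx] := fix_lt PR bR xR; move: bx; rewrite le_eqVlt => /predU1P[bx|].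
    by rewrite (fix_snd PR bR xR (esym bx)).
  by rewrite ltbx => bx; rewrite (lt_trans Kb bx) (lt_trans yb bx).
have bNR : (b, b) \in N ++ R by rewrite mem_cat bR orbT.
have ltb x : x \in N ++ R -> x.1 < b -> x.2 < b by move=> xNR; rewrite (fix_lt PNR bNR xNR).1.
exists N => //; split=> [x xN|y /[dup] /ysgap/andP[fy yb] /imN[z [yz Kz ltyz]]].
  have [/ysgap/andP[fx xb] _ ltx] := newN _ xN.
  by rewrite fx xb ltx ltb ?mem_cat ?xN.
by exists z; split=> //; apply: (ltb (y, z)).
Qed.

Lemma framed_gap_extend a b (M : piso) d f K (ys : seq rat) :
  framed_piso a b M -> a <= f -> monotone_gap d M f b ->
  {in M, forall x, f < x.1 < b -> K < x.1} -> K < b ->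
  {in ys, forall y, f < y < b} ->
  exists N, gap_extension a b d f K ys M N.
Proof.
move=> [PM frM sepM] af gapM KM Kb ysgap.
have PR := piso_orient d PM; have gapR := (monotone_gap_orient _ _ _ PM).2 gapM.
have Kgap : {in orient d M, forall x, f < x.1 < b -> K < x.2}.
  have [fM bM incM] := gapM; move=> x; rewrite mem_orient; case: (d) incM => incM xM gx.
    by apply: lt_trans (KM _ xM gx) (incM _ xM gx).
  have [_ ltfx] := fix_lt PM fM xM; have [ltxb _] := fix_lt PM bM xM.
  by apply: (KM _ xM); rewrite /= ltfx ltxb.
have [N0 PN0R [newN0 imN0]] := gap_extend PR gapR Kgap Kb ysgap.
have eNM : orient d (orient d N0 ++ M) = N0 ++ orient d M by rewrite orient_cat orientK.
have PNM : is_piso (orient d N0 ++ M) by rewrite -[_ ++ M](orientK d) eNM; apply: piso_orient.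
have newN : inside f b (orient d N0).
  move=> x; rewrite mem_orient; case: (d) => /newN0 [/andP[fx xb] /andP[ltx x2b]];
    by rewrite ?fx ?xb ?x2b ?(lt_trans fx ltx) ?x2b.
have frNM : framed a b (orient d N0 ++ M).
  by apply: framed_cat => // x /newN[/andP[fx xb] _]; rewrite (le_trans af (ltW fx)) ltW.
have gapNM : monotone_gap d (orient d N0 ++ M) f b.
  apply/(monotone_gap_orient _ _ _ PNM); rewrite eNM; have [fR bR incR] := gapR.
  split; rewrite ?mem_cat ?fR ?bR ?orbT // => x.
  by rewrite mem_cat => /orP[/newN0[_ /andP[]]//|/incR].
exists (orient d N0); split=> //.
- by move=> x /newN[/andP[fx xb] /andP[fx2 x2b]]; rewrite !(le_lt_trans af) ?xb ?x2b.
- split=> //; apply: fix_separated_gap_extend gapNM _ => //.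
  + by rewrite (framed_smin frNM) (framed_smin frM).
  + by rewrite (framed_smax frNM) (framed_smax frM).
  + by move=> x /newN[gx _]; right.
- move=> y /imN0[z [yz ltyz Kz zb]]; exists z; split=> //.
  by rewrite eNM; apply: piso_papp PN0R yz.
Qed.

Lemma framed_fix_or_below a b (M : piso) x : is_piso M -> framed a b M -> x \in M ->
  x = (b, b) \/ x.1 <= smax (a :: Ess M) /\ x.2 <= smax (a :: Ess M).
Proof.
move=> PM frM xM; have [_ bM _] := frM.
have below c : c = x.1 \/ c = x.2 -> c != b -> c <= smax (a :: Ess M).
  move=> xc; case: (framed_coord frM xM xc) => [->|->|cE]; first by rewrite smax_ge ?mem_head.
    by rewrite eqxx.
  by rewrite smax_ge // inE cE orbT.
have [x1b|x1b] := eqVneq x.1 b.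
  by left; rewrite [x]surjective_pairing x1b (fix_snd PM bM xM x1b).
have [x2b|x2b] := eqVneq x.2 b; first by rewrite (fix_fst PM bM xM x2b) eqxx in x1b.
by right; rewrite !below //; [right|left].
Qed.

Lemma framed_insert_fix a b (M : piso) f : framed_piso a b M ->
  smax (a :: Ess M) < f -> f < b ->
  framed_piso a b ((f, f) :: M) /\ {in (f, f) :: M, forall x, ~~ (f < x.1 < b)}.
Proof.
move=> [PM frM sepM] Lf fb; have [aM bM _] := frM.
have af : a < f by apply: le_lt_trans Lf; rewrite smax_ge ?mem_head.
have below x : x \in M -> x = (b, b) \/ x.1 < f /\ x.2 < f.
  move/(framed_fix_or_below PM frM) => [->|[x1L x2L]]; first by left.
  by right; rewrite !(le_lt_trans _ Lf).
have PfM : is_piso ((f, f) :: M).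
  apply: piso_cons => // [|x /below[->//|[x1f x2f]]].
    apply/pdomP => -[y /below[[fb' _]|[ff _]]]; last by rewrite ltxx in ff.
    by rewrite fb' ltxx in fb.
  by rewrite x1f x2f !ltNge !ltW.
have gap0 : {in (f, f) :: M, forall x, ~~ (f < x.1 < b)}.
  move=> x /predU1P[->|/below[->|[x1f _]]] /=; rewrite ?ltxx ?andbF //.
  by rewrite ltNge (ltW x1f).
have frfM : framed a b ((f, f) :: M).
  apply: (framed_cat (N := [:: (f, f)])) => // x.
  by rewrite mem_seq1 => /eqP->; rewrite /= !ltW.
have gap : monotone_gap true ((f, f) :: M) f b.
  by split; rewrite ?mem_head ?inE ?bM ?orbT // => x /gap0 /negPf->.
split=> //; split=> //; apply: (fix_separated_gap_extend (N := [:: (f, f)]) _ sepM _ _ gap) => //.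
- by rewrite (framed_smin frfM) (framed_smin frM).
- by rewrite (framed_smax frfM) (framed_smax frM).
- by move=> x; rewrite mem_seq1 => /eqP->; left.
Qed.

Lemma framed_new_gap a b (M : piso) d K (ys : seq rat) : framed_piso a b M -> a < b -> K < b ->
  {in ys, forall y, a < y < b} -> (forall y e, y \in ys -> e \in Ess M -> e < y) ->
  exists f N, [/\ a <= f < b, {in ys, forall y, f < y} & gap_extension a b d f K ys M N].
Proof.
move=> fpM ab Kb ysab Essys; have [PM frM _] := fpM.
pose L := smax (a :: Ess M); pose U := smin (b :: ys).
have LU : L < U.
  apply: smax_lt => // l; rewrite inE => /predU1P[->|lE]; apply: smin_gt => // u;
    rewrite inE => /predU1P[->//|uy]; last exact: Essys.
    by case/andP: (ysab _ uy).
  by case/andP: (Ess_framed PM frM lE).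
pose f := (L + U) / 2; have [Lf fU] : L < f /\ f < U by rewrite !midf_lt.
have af : a < f by rewrite (le_lt_trans _ Lf) // smax_ge ?mem_head.
have fb : f < b by rewrite (lt_le_trans fU) // smin_le ?mem_head.
have fys : {in ys, forall y, f < y}.
  by move=> y yys; rewrite (lt_le_trans fU) // smin_le // inE yys orbT.
have [fpfM gap0] := framed_insert_fix fpM Lf fb.
have gap : monotone_gap d ((f, f) :: M) f b.
  have [_ bM _] := frM.
  by split; rewrite ?mem_head ?inE ?bM ?orbT // => x /gap0 /negPf->.
have Kgap : {in (f, f) :: M, forall x, f < x.1 < b -> K < x.1} by move=> x /gap0 /negPf->.
have ysgap : {in ys, forall y, f < y < b}.
  by move=> y yys; rewrite fys //; case/andP: (ysab _ yys).
have [N [Nab fpNM gapN imN]] := framed_gap_extend fpfM (ltW af) gap Kgap Kb ysgap.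
exists f, (N ++ [:: (f, f)]); split; [by rewrite (ltW af) fb|done|].
rewrite /gap_extension -catA; split=> //.
move=> x; rewrite mem_cat => /orP[/Nab //|]; rewrite mem_seq1 => /eqP->.
by rewrite /= af fb.
Qed.

(** * Liberation inside one elementary piece *)

Definition lib_state a b (E : seq rat) (v : seq letter) (P Q : piso) : Prop :=
  [/\ framed_piso a b P, framed_piso a b Q, reduced v &
      exists l v' f, [/\ v = l :: v', a <= f < b,
        monotone_gap (pos_letter l) (letter_map P Q l) f b &
        forall c, c \in E -> exists2 y, weval P Q v c = Some y &
          f < y < b /\ {in Ess (other_map P Q l), forall e, e < y}]].

Lemma lib_state_cons_ext a b E v (P Q : piso) l (N : piso) f :
  framed_piso a b P -> framed_piso a b Q -> reduced (l :: v) -> inside a b N ->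
  framed_piso a b (N ++ letter_map P Q l) -> a <= f < b ->
  monotone_gap (pos_letter l) (N ++ letter_map P Q l) f b ->
  (forall c, c \in E -> exists2 y, weval P Q v c = Some y & exists2 z,
     papp (orient (pos_letter l) (N ++ letter_map P Q l)) y = Some z &
     f < z < b /\ {in Ess (other_map P Q l), forall e, e < z}) ->
  exists NP NQ, [/\ inside a b NP, inside a b NQ &
    lib_state a b E (l :: v) (NP ++ P) (NQ ++ Q)].
Proof.
move=> fpP fpQ rlv Nab fpNM fab gapNM im.
pose NP := if s_letter l then N else [::]; pose NQ := if s_letter l then [::] else N.
have eM : letter_map (NP ++ P) (NQ ++ Q) l = N ++ letter_map P Q l.
  by rewrite /NP /NQ /letter_map; case: s_letter.
have eO : other_map (NP ++ P) (NQ ++ Q) l = other_map P Q l.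
  by rewrite /NP /NQ /other_map; case: s_letter.
have [fpP' fpQ'] : framed_piso a b (NP ++ P) /\ framed_piso a b (NQ ++ Q).
  by move: fpNM; rewrite /NP /NQ /letter_map; case: s_letter.
have [[PP' _ _] [PQ' _ _]] := (fpP', fpQ').
exists NP, NQ; split; try by rewrite /NP /NQ; case: s_letter => // x.
split=> //; exists l, v, f; split; rewrite ?eM ?eO //.
have sP : {subset P <= NP ++ P} by move=> x xP; rewrite mem_cat xP orbT.
have sQ : {subset Q <= NQ ++ Q} by move=> x xQ; rewrite mem_cat xQ orbT.
move=> c /im[y vy [z yz zab]]; exists z => //=.
by rewrite (weval_subset PP' PQ' sP sQ vy) /= act_letter eM.
Qed.

Lemma reduced_behead l v : reduced (l :: v) -> reduced v.
Proof. by case: v => //= ? ? /andP[]. Qed.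

Lemma reduced_same_kind l l' v :
  reduced [:: l, l' & v] -> s_letter l = s_letter l' -> l = l'.
Proof. by case: l; case: l'. Qed.

Lemma lib_state_cons a b E v (P Q : piso) l : a < b ->
  lib_state a b E v P Q -> reduced (l :: v) ->
  exists NP NQ, [/\ inside a b NP, inside a b NQ &
    lib_state a b E (l :: v) (NP ++ P) (NQ ++ Q)].
Proof.
move=> ab [fpP fpQ _ [l0 [v' [f [ev /andP[af fb] gap im]]]]] rlv.
pose ys := pmap (weval P Q v) E.
have ysP y : y \in ys -> f < y < b /\ {in Ess (other_map P Q l0), forall e, e < y}.
  rewrite mem_pmap => /mapP[c /im[y' vy' hy'] vy].
  by move: vy'; rewrite -vy => -[->].
have fpM : framed_piso a b (letter_map P Q l) by rewrite /letter_map; case: s_letter.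
have [PM frM _] := fpM.
have [same|diff] := eqVneq (s_letter l) (s_letter l0).
  have ll0 : l = l0 by apply: (reduced_same_kind (v := v')) same; rewrite -ev.
  subst l0.
  have fM : {in letter_map P Q l, forall x, f < x.1 < b -> f < x.1} by move=> x _ /andP[].
  have ysgap : {in ys, forall y, f < y < b} by move=> y /ysP[].
  have [N [Nab fpNM gapNM imN]] := framed_gap_extend fpM af gap fM fb ysgap.
  apply: (lib_state_cons_ext (N := N) (f := f)); rewrite ?af ?fb // => c cE.
  have [y vy [_ Essy]] := im c cE.
  have [|z [yz ltyz fz zb]] := imN y; first by rewrite mem_pmap -vy map_f.
  exists y => //; exists z; rewrite ?fz ?zb //; split=> // e /Essy /lt_trans; exact.
pose K := smax (a :: Ess (other_map P Q l)).
have Kb : K < b.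
  apply: smax_lt => // e; rewrite inE => /predU1P[->//|].
  have [PO frO _] : framed_piso a b (other_map P Q l) by rewrite /other_map; case: s_letter.
  by move/(Ess_framed PO frO)/andP => -[].
have ysab : {in ys, forall y, a < y < b}.
  by move=> y /ysP[/andP[fy ->]]; rewrite (le_lt_trans af fy).
have Essys y e : y \in ys -> e \in Ess (letter_map P Q l) -> e < y.
  by move=> /ysP[_ Essy]; rewrite (letter_map_swap _ _ diff); apply: Essy.
have [f' [N [/andP[af' f'b] f'ys [Nab fpNM gapNM imN]]]] :=
  framed_new_gap (pos_letter l) fpM ab Kb ysab Essys.
apply: (lib_state_cons_ext (N := N) (f := f')); rewrite ?af' ?f'b // => c cE.
have [y vy _] := im c cE.
have yys : y \in ys by rewrite mem_pmap -vy map_f.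
have [z [yz ltyz Kz zb]] := imN y yys.
exists y => //; exists z; rewrite ?zb ?(lt_trans (f'ys _ yys)) //; split=> // e Ee.
by apply: le_lt_trans Kz; rewrite smax_ge // inE Ee orbT.
Qed.

Lemma lib_state_catl a b E w (P Q : piso) u : a < b ->
  lib_state a b E w P Q -> reduced (u ++ w) ->
  exists NP NQ, [/\ inside a b NP, inside a b NQ &
    lib_state a b E (u ++ w) (NP ++ P) (NQ ++ Q)].
Proof.
move=> ab st; elim: u => [|l u IH] ruw; first by exists [::], [::].
have [NP [NQ [NPab NQab st']]] := IH (reduced_behead ruw).
have [NP' [NQ' [NP'ab NQ'ab st'']]] := lib_state_cons ab st' ruw.
exists (NP' ++ NP), (NQ' ++ NQ); rewrite -!catA; split=> // x;
  rewrite mem_cat => /orP[]; by [move/NP'ab|move/NPab|move/NQ'ab|move/NQab].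
Qed.

Lemma lib_state_of_lib_p_el a b (P0 Q0 P Q : piso) w :
  framed a b P -> framed a b Q -> framed a b Q0 ->
  lib_p_el P0 Q0 P Q w -> lib_state a b (Ess P0 ++ Ess Q0) w P Q.
Proof.
move=> frP frQ frQ0 [[PP [PQ [_ [_ rw]]]] [iP iQ] _ tw [[def minE] [f [fb [im mono]]]]].
rewrite (framed_smax frQ0) in fb im mono.
have fpP : framed_piso a b P by split=> //; apply: informative_fix_separated.
have fpQ : framed_piso a b Q by split=> //; apply: informative_fix_separated.
split=> //; case: w rw tw def minE im mono => [//|l v] rw tw def minE im mono.
have [Ql Pl] : letter_map P Q l = Q /\ other_map P Q l = P by move: tw; case: (l).
have gap : monotone_gap (pos_letter l) (letter_map P Q l) f b.
  rewrite Ql; move: tw mono; case: (l) => // _; [move/p_increasingE|move/p_decreasingE];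
    by apply.
have af : a <= f by case: frQ => _ _ /(_ (f, f)) fab; case: gap => + _ _; rewrite Ql => /fab /andP[].
exists l, v, f; split; rewrite ?af ?fb // => c cE.
have E0 : Ess P0 ++ Ess Q0 != [::] by apply: contraTneq cE => ->.
pose m := smin (Ess P0 ++ Ess Q0); have mE : m \in Ess P0 ++ Ess Q0 by apply: smin_mem.
case vc: (weval P Q (l :: v) c) (def c cE) => [y|//] _.
case vm: (weval P Q (l :: v) m) (def m mE) => [ym|//] _.
have ymy : ym <= y.
  have := smin_le cE; rewrite le_eqVlt => /predU1P[mc|mc]; first by move: vm; rewrite /m mc vc => -[->].
  exact/ltW/(weval_lt PP PQ vm vc mc).
exists y => //; rewrite (im c) // Pl; split=> // e eP.
by apply: lt_le_trans ymy; apply: (minE m mE (fun c' => @smin_le _ c') ym vm).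
Qed.

Lemma lib_p_el_of_lib_state a b (P0 Q0 P Q : piso) v :
  framed a b P0 -> framed a b Q0 -> extends P P0 -> extends Q Q0 -> starts_t v ->
  lib_state a b (Ess P0 ++ Ess Q0) v P Q -> lib_p_el P0 Q0 P Q v.
Proof.
move=> frP0 frQ0 PP0 QQ0 tv [[PP frP sepP] [PQ frQ sepQ] rv [l [v' [f [ev /andP[af fb] gap im]]]]].
have [Ql Pl] : letter_map P Q l = Q /\ other_map P Q l = P by move: tv; rewrite ev; case: (l).
split=> //.
- by split; apply: fix_separated_informative.
- by rewrite (framed_smin frP) (framed_smin frQ) (framed_smin frP0) (framed_smin frQ0)
    (framed_smax frP) (framed_smax frQ) (framed_smax frP0) (framed_smax frQ0).
split; first split.
- by move=> c /im[y ->].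
- move=> m /im[y' vy' [_ Essy]] _ y; rewrite vy' => -[<-].
  by rewrite Pl in Essy.
exists f; rewrite (framed_smax frQ0); split=> //; split.
  by move=> c y /im[y' vy' [fy _]]; rewrite vy' => -[<-].
rewrite Ql in gap; rewrite ev; move: tv gap; rewrite ev.
by case: l {ev Ql Pl im} => //= _; [move/(p_increasingE _ _ PQ)|move/(p_decreasingE _ _ PQ)].
Qed.

Lemma lib_p_el_catl a b (P0 Q0 P Q : piso) w u : a < b ->
  framed a b P0 -> framed a b Q0 -> framed a b P -> framed a b Q ->
  lib_p_el P0 Q0 P Q w -> reduced (u ++ w) -> u = [::] \/ starts_t u ->
  exists NP NQ, [/\ inside a b NP, inside a b NQ &
    lib_p_el P0 Q0 (NP ++ P) (NQ ++ Q) (u ++ w)].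
Proof.
move=> ab frP0 frQ0 frP frQ lib ruw [->|tu]; first by exists [::], [::].
have [NP [NQ [NPab NQab st]]] :=
  lib_state_catl ab (lib_state_of_lib_p_el frP frQ frQ0 lib) ruw.
have [[_ [_ [PP0 [QQ0 _]]]] _ _ _ _] := lib.
exists NP, NQ; split=> //; apply: lib_p_el_of_lib_state st => //.
- by move=> x /PP0 xP; rewrite mem_cat xP orbT.
- by move=> x /QQ0 xQ; rewrite mem_cat xQ orbT.
- by case: u tu {ruw}.
Qed.

(** * Gluing the elementary pieces *)

Lemma mem_restrict (P : piso) a b x : (x \in restrict P a b) = (x \in P) && (a <= x.1 <= b).
Proof. by rewrite mem_filter andbC. Qed.

Lemma restrict_cat (N P : piso) a b : restrict (N ++ P) a b = restrict N a b ++ restrict P a b.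
Proof. exact: filter_cat. Qed.

Lemma restrict_inside a b (N : piso) : inside a b N -> restrict N a b = N.
Proof. by move=> Nab; apply/all_filterP/allP => x /Nab[/andP[ax xb] _]; rewrite !ltW. Qed.

Lemma restrict_outside a b c d (N : piso) : inside a b N -> b <= c \/ d <= a ->
  restrict N c d = [::].
Proof.
move=> Nab cd; apply/eqP; rewrite -[_ == _]negbK -has_filter; apply/hasPn => x /Nab[/andP[ax xb] _].
rewrite negb_and -!ltNge; case: cd => [bc|da]; first by rewrite (lt_le_trans xb bc).
by rewrite (le_lt_trans da ax) orbT.
Qed.

Lemma framed_restrict a b (P : piso) : a <= b -> (a, a) \in P -> (b, b) \in P ->
  framed a b (restrict P a b).
Proof.
move=> ab aP bP; split; rewrite ?mem_restrict ?aP ?bP /= ?lexx ?ab //.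
by move=> x; rewrite mem_restrict => /andP[].
Qed.

Lemma piso_cat_restrict a b (N P : piso) : is_piso P -> (a, a) \in P -> (b, b) \in P ->
  inside a b N -> is_piso (N ++ restrict P a b) -> is_piso (N ++ P).
Proof.
move=> PP aP bP Nab [uNR ltNR].
have out z : z \in P -> ~~ (a <= z.1 <= b) -> z.1 < a /\ z.2 < a \/ b < z.1 /\ b < z.2.
  move=> zP; rewrite negb_and -!ltNge => /orP[za|bz]; [left|right].
    by rewrite za -(fix_lt PP aP zP).1.
  by rewrite bz -(fix_lt PP bP zP).2.
have inR z : z \in P -> a <= z.1 <= b -> z \in N ++ restrict P a b.
  by move=> zP zab; rewrite mem_cat mem_restrict zP zab orbT.
have inN z : z \in N -> z \in N ++ restrict P a b by move=> zN; rewrite mem_cat zN.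
split.
  move: uNR; rewrite /pdom !map_cat !cat_uniq => /and3P[-> disj _] /=.
  case: PP => -> _; rewrite andbT; apply/hasPn => c /mapP[z zP ->].
  apply/negP => /mapP[x xN ex]; have [/andP[ax xb] _] := Nab _ xN.
  have zR : z \in restrict P a b by rewrite mem_restrict zP ex !ltW.
  by move/hasPn: disj => /(_ z.1 (map_f _ zR)); rewrite ex map_f.
have cmp x y : x \in N -> y \in P -> ~~ (a <= y.1 <= b) ->
    (x.1 < y.1) = (x.2 < y.2) /\ (y.1 < x.1) = (y.2 < x.2).
  move=> xN yP /(out _ yP)[[ya ya2]|[by_ by2]];
  have [/andP[ax xb] /andP[ax2 xb2]] := Nab _ xN.
    have h1 := lt_trans ya ax; have h2 := lt_trans ya2 ax2.
    by rewrite h1 h2 (lt_gtF h1) (lt_gtF h2).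
  have h1 := lt_trans xb by_; have h2 := lt_trans xb2 by2.
  by rewrite h1 h2 (lt_gtF h1) (lt_gtF h2).
move=> x y; rewrite !mem_cat => /orP[xN|xP] /orP[yN|yP].
- by apply: ltNR; apply: inN.
- have [yab|ynab] := boolP (a <= y.1 <= b); first by apply: ltNR; [apply: inN|apply: inR].
  by case: (cmp _ _ xN yP ynab).
- have [xab|xnab] := boolP (a <= x.1 <= b); first by apply: ltNR; [apply: inR|apply: inN].
  by case: (cmp _ _ yN xP xnab).
- by case: PP => _; apply.
Qed.

Lemma pdom_cat_inside a b (N P : piso) : a \in pdom P -> b \in pdom P -> inside a b N ->
  smin (pdom (N ++ P)) = smin (pdom P) /\ smax (pdom (N ++ P)) = smax (pdom P).
Proof.
move=> aP bP Nab; have P0 : pdom P != [::] by apply: contraTneq aP => ->.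
have sub : {subset pdom P <= pdom (N ++ P)} by move=> c; rewrite /pdom map_cat mem_cat orbC => ->.
have memNP c : c \in pdom (N ++ P) -> a <= c <= b \/ c \in pdom P.
  rewrite /pdom map_cat mem_cat => /orP[/mapP[x /Nab[/andP[ax xb] _] ->]|]; last by right.
  by left; rewrite !ltW.
split; [apply: smin_eq|apply: smax_eq]; rewrite ?sub ?smin_mem ?smax_mem //.
  move=> c /memNP[/andP[ac _]|]; last exact: smin_le.
  exact: le_trans (smin_le aP) ac.
move=> c /memNP[/andP[_ cb]|]; last exact: smax_ge.
exact: le_trans cb (smax_ge bP).
Qed.

Lemma mem_common_fix (p q : piso) c :
  (c \in common_fix p q) = ((c, c) \in p) && ((c, c) \in q).
Proof. by rewrite mem_sort mem_undup mem_filter andbC !mem_pfix. Qed.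

Lemma sorted_common_fix (p q : piso) : sorted <%R (common_fix p q).
Proof. by rewrite sort_lt_sorted undup_uniq. Qed.

Section Pieces.

Variables (p q : piso).
Let A := common_fix p q.

Definition pieces_liberated (P Q : piso) (word : nat -> seq letter) : Prop :=
  forall j, (j.+1 < size A)%N ->
    lib_p_el (restrict p A`_j A`_j.+1) (restrict q A`_j A`_j.+1)
             (restrict P A`_j A`_j.+1) (restrict Q A`_j A`_j.+1) (word j).

Lemma pieces_liberated_extend (P Q NP NQ : piso) word word' J :
  (J.+1 < size A)%N -> inside A`_J A`_J.+1 NP -> inside A`_J A`_J.+1 NQ ->
  pieces_liberated P Q word -> (forall j, j != J -> word' j = word j) ->
  lib_p_el (restrict p A`_J A`_J.+1) (restrict q A`_J A`_J.+1)
           (NP ++ restrict P A`_J A`_J.+1) (NQ ++ restrict Q A`_J A`_J.+1) (word' J) ->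
  pieces_liberated (NP ++ P) (NQ ++ Q) word'.
Proof.
move=> JA NPab NQab lib eword libJ j jA; rewrite !restrict_cat.
have sA := sorted_common_fix p q.
have [jJ|Jj|->] := ltngtP j J; last by rewrite (restrict_inside NPab) (restrict_inside NQab).
  have out : A`_J.+1 <= A`_j \/ A`_j.+1 <= A`_J.
    by right; apply: (sorted_le_nth sA); rewrite ?(ltnW JA).
  rewrite (restrict_outside NPab out) (restrict_outside NQab out) eword ?ltn_eqF //.
  exact: lib.
have out : A`_J.+1 <= A`_j \/ A`_j.+1 <= A`_J.
  by left; apply: (sorted_le_nth sA); rewrite // ltnW.
rewrite (restrict_outside NPab out) (restrict_outside NQab out) eword ?gtn_eqF //.
exact: lib.
Qed.

End Pieces.

Lemma lib_p_pieces_catl (p q p' q' : piso) w u :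
  lib_p p q p' q' w -> reduced (u ++ w) -> u = [::] \/ starts_t u ->
  forall J, (J <= (size (common_fix p q)).-1)%N -> exists P Q : piso,
    [/\ is_piso P /\ is_piso Q, {subset p' <= P} /\ {subset q' <= Q},
        smin (pdom P) = smin (pdom p') /\ smax (pdom P) = smax (pdom p'),
        smin (pdom Q) = smin (pdom q') /\ smax (pdom Q) = smax (pdom q') &
        pieces_liberated p q P Q (fun j => if (j < J)%N then u ++ w else w)].
Proof.
move=> [[Pp' [Pq' [p'p [q'q _]]]] _ _ _ lib] ruw tu; set A := common_fix p q.
elim=> [|J IH] JA; first by exists p', q'; split; [split|split|split|split|exact: lib].
have JA' : (J.+1 < size A)%N by move: JA; case: (size A) => //= n; rewrite ltnS.
have [P [Q [[PP PQ] [p'P q'Q] [mP MP] [mQ MQ] libP]]] := IH (ltnW JA).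
pose a := A`_J; pose b := A`_J.+1.
have ab : a < b by apply: sorted_lt_nth (sorted_common_fix p q) _ _ _; rewrite // ltnW.
have fixA k : (k < size A)%N -> (A`_k, A`_k) \in p /\ (A`_k, A`_k) \in q.
  by move=> kA; apply/andP; rewrite -mem_common_fix mem_nth.
have [ap aq] := fixA J (ltnW JA'); have [bp bq] := fixA J.+1 JA'.
have [aP bP aQ bQ] : [/\ (a, a) \in P, (b, b) \in P, (a, a) \in Q & (b, b) \in Q].
  by split; [apply/p'P/p'p|apply/p'P/p'p|apply/q'Q/q'q|apply/q'Q/q'q].
have libJ := libP J JA'; rewrite /= ltnn in libJ.
have [NP [NQ [NPab NQab libJ']]] := lib_p_el_catl ab (framed_restrict (ltW ab) ap bp)
  (framed_restrict (ltW ab) aq bq) (framed_restrict (ltW ab) aP bP)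
  (framed_restrict (ltW ab) aQ bQ) libJ ruw tu.
have domP : a \in pdom P /\ b \in pdom P by split; apply/pdomP; [exists a|exists b].
have domQ : a \in pdom Q /\ b \in pdom Q by split; apply/pdomP; [exists a|exists b].
have [eminP emaxP] := pdom_cat_inside domP.1 domP.2 NPab.
have [eminQ emaxQ] := pdom_cat_inside domQ.1 domQ.2 NQab.
have [[PNP [PNQ _]] _ _ _ _] := libJ'.
exists (NP ++ P), (NQ ++ Q); split.
- by split; [apply: piso_cat_restrict PP aP bP NPab PNP|apply: piso_cat_restrict PQ aQ bQ NQab PNQ].
- by split=> x xp; rewrite mem_cat ?p'P ?q'Q ?orbT.
- by rewrite eminP emaxP.
- by rewrite eminQ emaxQ.
apply: (pieces_liberated_extend JA' NPab NQab libP) => [j jJ|]; last by rewrite ltnSn.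
by rewrite ltnS leq_eqVlt (negPf jJ).
Qed.

Lemma lib_p_catl (p q p' q' : piso) w u :
  lib_p p q p' q' w -> reduced (u ++ w) -> u = [::] \/ starts_t u ->
  exists p'' q'' : piso,
    [/\ is_piso p'', is_piso q'', extends p'' p', extends q'' q' & lib_p p q p'' q'' (u ++ w)].
Proof.
move=> lib ruw tu.
have [P [Q [[PP PQ] [p'P q'Q] [mP MP] [mQ MQ] libP]]] := lib_p_pieces_catl lib ruw tu (leqnn _).
have [[_ [_ [p'p [q'q _]]]] m1 m2 [M1 M2] _] := lib.
have Pp : extends P p by move=> x /p'p/p'P.
have Qq : extends Q q by move=> x /q'q/q'Q.
exists P, Q; split=> //; split; rewrite ?mP ?mQ ?MP ?MQ //.
move=> j jA; have := libP j jA; suff -> : (j < (size (common_fix p q)).-1)%N by [].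
by rewrite -ltnS prednK // (leq_ltn_trans _ jA).
Qed.

Lemma reduced_swap s : reduced (map swap_letter s) = reduced s.
Proof. by elim: s => [//|x [|y s] IH] //; move: IH => /= ->; case: x; case: y. Qed.

Theorem lemma3p10 :
  (forall (p q p' q' : piso) (w u : seq letter),
      is_piso p -> is_piso q -> pw_elementary p q ->
      lib_p p q p' q' w ->
      reduced u -> (u = [::] \/ starts_t u) -> reduced (u ++ w) ->
      exists p'' q'' : piso,
        [/\ is_piso p'', is_piso q'', extends p'' p', extends q'' q' &
            lib_p p q p'' q'' (u ++ w)]) /\
  (forall (p q p' q' : piso) (w u : seq letter),
      is_piso p -> is_piso q -> pw_elementary p q ->
      lib_q p q p' q' w ->
      reduced u -> (u = [::] \/ starts_s u) -> reduced (u ++ w) ->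
      exists p'' q'' : piso,
        [/\ is_piso p'', is_piso q'', extends p'' p', extends q'' q' &
            lib_q p q p'' q'' (u ++ w)]).
Proof.
split=> p q p' q' w u _ _ _ lib _ su ruw; first exact: lib_p_catl.
have [||q'' [p'' [Pq'' Pp'' q''q' p''p' libq]]] := lib_p_catl (u := map swap_letter u) lib.
- by rewrite -map_cat reduced_swap.
- case: su => [->|su]; [by left|right].
  by move: su; case: (u) => // -[].
by exists p'', q''; split=> //; rewrite /lib_q map_cat.
Qed.
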